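(* There exist a compact metric space $X$ and a flow $\phi$ on $X$ which is not singular-expansive but such that, for every compact invariant set $\Lambda\subset X$ with $\Lambda\cap Sing(\phi)=\emptyset$, the restricted flow $\phi|_\Lambda$ is expansive.
   Context: A flow is a continuous $\phi:\mathbb{R}\times X\to X$ with $\phi_0=\mathrm{id}$, $\phi_{t+s}=\phi_t\circ\phi_s$; $\phi_I(x)=\{\phi_t(x):t\in I\}$; $Sing(\phi)$ is the set of fixed points; $dist(z,A)=\inf_{a\in A}d(z,a)$, with $dist(z,\emptyset)=diam(X)$. $\phi$ is singular-expansive if for every $\epsilon>0$ there is $\delta>0$ such that whenever $x,y\in X$ and an increasing homeomorphism $s:\mathbb{R}\to\mathbb{R}$ satisfy $d(\phi_t(x),\phi_{s(t)}(y))\le\delta\,dist(\phi_t(x),Sing(\phi))$ for all $t$, then $\phi_{s(t_0)}(y)\in\phi_{[t_0-\epsilon,t_0+\epsilon]}(x)$ for some $t_0\in\mathbb{R}$. A flow $\psi$ on a compact metric space $Y$ is expansive if for every $\epsilon>0$ there is $\delta>0$ such that whenever $x,y\in Y$ and a continuous $s:\mathbb{R}\to\mathbb{R}$ with $s(0)=0$ satisfy $d(\psi_t(x),\psi_{s(t)}(y))\le\delta$ for all $t$, then $y\in\psi_{[-\epsilon,\epsilon]}(x)$. *)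

From Stdlib Require Import Reals List.
From Coquelicot Require Import Coquelicot.
Open Scope R_scope.
Set Implicit Arguments.

Record MetricSpace := {
  carrier :> Type;
  mdist : carrier -> carrier -> R;
  mdist_ge0 : forall x y, 0 <= mdist x y;
  mdist_eq0 : forall x y, mdist x y = 0 <-> x = y;
  mdist_sym : forall x y, mdist x y = mdist y x;
  mdist_tri : forall x y z, mdist x z <= mdist x y + mdist y z
}.

Section Metric.
Context {X : MetricSpace}.
Notation d := (mdist X).

Definition open_set (U : X -> Prop) : Prop :=
  forall x, U x -> exists r, 0 < r /\ forall y, d x y < r -> U y.

Definition compact_set (K : X -> Prop) : Prop :=
  forall (I : Type) (U : I -> X -> Prop),
    (forall i, open_set (U i)) ->
    (forall x, K x -> exists i, U i x) ->
    exists l : list I, forall x, K x -> exists i, In i l /\ U i x.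

Definition compact_space : Prop := compact_set (fun _ => True).

Definition diam : R := real (Lub_Rbar (fun r => exists x y, r = d x y)).

Definition dist_set (z : X) (A : X -> Prop) : R :=
  real (Glb_Rbar (fun r => (exists a, A a /\ r = d z a)
                         \/ ((forall a, ~ A a) /\ r = diam))).

Definition is_flow (phi : R -> X -> X) : Prop :=
  (forall t x eps, 0 < eps -> exists delta, 0 < delta /\
      forall s y, Rabs (s - t) < delta -> d x y < delta ->
        d (phi t x) (phi s y) < eps)
  /\ (forall x, phi 0 x = x)
  /\ (forall t s x, phi (t + s) x = phi t (phi s x)).

Definition Sing (phi : R -> X -> X) (x : X) : Prop := forall t, phi t x = x.

Definition incr_homeo (s : R -> R) : Prop :=
  continuity s /\ (forall a b, a < b -> s a < s b) /\ (forall y, exists x, s x = y).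

Definition singular_expansive (phi : R -> X -> X) : Prop :=
  forall eps, 0 < eps -> exists delta, 0 < delta /\
    forall (x y : X) (s : R -> R), incr_homeo s ->
      (forall t, d (phi t x) (phi (s t) y) <= delta * dist_set (phi t x) (Sing phi)) ->
      exists t0 u, t0 - eps <= u <= t0 + eps /\ phi (s t0) y = phi u x.

Definition invariant (phi : R -> X -> X) (L : X -> Prop) : Prop :=
  forall t x, L x -> L (phi t x).

Definition expansive_on (phi : R -> X -> X) (L : X -> Prop) : Prop :=
  forall eps, 0 < eps -> exists delta, 0 < delta /\
    forall (x y : X) (s : R -> R), L x -> L y -> continuity s -> s 0 = 0 ->
      (forall t, d (phi t x) (phi (s t) y) <= delta) ->
      exists u, - eps <= u <= eps /\ y = phi u x.

End Metric.

From Stdlib Require Import Reals Lra Lia Arith List ClassicalEpsilon ProofIrrelevance.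
Require Stdlib.Reals.Rtopology.
From Coquelicot Require Import Coquelicot.
Open Scope R_scope.

(** The space is [{0} ∪ ⋃_n I_n] on the real line, with [I_n = [2·4^-(n+1), 3·4^-(n+1)]].
    On each [I_n] the flow is the logistic flow [u' = u (1 - u)] run at speed [4^-(n+1)], and
    [0] is fixed; so the singular points are [0] and the endpoints of the [I_n].

    Every regular orbit tends to a singular endpoint of its interval, and a compact set at
    positive distance from that endpoint cannot contain the whole orbit: the only compact
    invariant set without singularities is empty, and the expansiveness of the restrictions
    holds vacuously.

    Singular expansiveness fails on slow intervals: the time-2 image of the midpoint of [I_n]
    stays, at all times and without reparametrization, within [e^(2·4^-(n+1)) - 1] times the
    distance of the midpoint's orbit to the singular set, yet it is not within time 1 of the
    corresponding point of that orbit. *)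

Definition scale (n : nat) : R := (/4) ^ S n.

Lemma scale_pos n : 0 < scale n.
Proof. apply pow_lt; lra. Qed.

Lemma scale_S n : scale (S n) = scale n / 4.
Proof. unfold scale; simpl; lra. Qed.

Lemma scale_le n : scale n <= 1/4.
Proof.
  induction n as [|n IH]; [unfold scale; simpl; lra|].
  rewrite scale_S; pose proof (scale_pos n); lra.
Qed.

Lemma scale_antitone n m : (n <= m)%nat -> scale m <= scale n.
Proof.
  induction 1 as [|m _ IH]; [lra|].
  rewrite scale_S; pose proof (scale_pos m); lra.
Qed.

Lemma scale_gap n m : (n < m)%nat -> scale m <= scale n / 4.
Proof. intros Hnm; apply (scale_antitone (S n)) in Hnm; rewrite scale_S in Hnm; lra. Qed.

Lemma scale_small eta : 0 < eta -> exists n, scale n <= eta.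
Proof.
  intros Heta.
  destruct (pow_lt_1_zero (/4) ltac:(rewrite Rabs_pos_eq; lra) eta Heta) as [N HN].
  exists N; specialize (HN (S N) ltac:(lia)).
  rewrite Rabs_pos_eq in HN by (apply pow_le; lra); unfold scale; lra.
Qed.

Lemma exp_ge_1_plus x : 1 + x <= exp x.
Proof.
  destruct (Req_dec x 0) as [->|Hx]; [rewrite exp_0; lra|].
  left; apply exp_ineq1; exact Hx.
Qed.

Lemma exp_le_exp x y : x <= y -> exp x <= exp y.
Proof. intros [Hlt| ->]; [left; apply exp_increasing|]; lra. Qed.

Lemma exp_sub1_le x : 0 <= x <= 1/2 -> exp x - 1 <= 2 * x.
Proof.
  intros Hx.
  assert (Hinv : exp x * exp (- x) = 1) by (rewrite <- exp_plus, Rplus_opp_r, exp_0; lra).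
  pose proof (exp_ge_1_plus (- x)); pose proof (exp_pos x); nra.
Qed.

(** The time-[a] map of [u' = u (1 - u)]. *)
Definition logistic (a u : R) : R := u * exp a / (1 - u + u * exp a).

Lemma logistic_0 u : logistic 0 u = u.
Proof. unfold logistic; rewrite exp_0; field; lra. Qed.

Lemma logistic_at_0 a : logistic a 0 = 0.
Proof. unfold logistic, Rdiv; ring. Qed.

Lemma logistic_at_1 a : logistic a 1 = 1.
Proof. pose proof (exp_pos a); unfold logistic; field; lra. Qed.

Section Logistic.
Variable u : R.
Hypothesis u01 : 0 <= u <= 1.

Lemma logistic_denom_pos a : 0 < 1 - u + u * exp a.
Proof. pose proof (exp_pos a); destruct (Req_dec u 0) as [->|]; nra. Qed.

Lemma logistic_range a : 0 <= logistic a u <= 1.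
Proof.
  pose proof (logistic_denom_pos a); pose proof (exp_pos a); unfold logistic.
  split.
  - apply Rle_mult_inv_pos; nra.
  - apply Rmult_le_reg_r with (1 - u + u * exp a); [lra|].
    unfold Rdiv; rewrite Rmult_assoc, Rinv_l by lra; nra.
Qed.

Lemma logistic_add a b : logistic (a + b) u = logistic a (logistic b u).
Proof.
  pose proof (logistic_denom_pos b); pose proof (logistic_denom_pos (a + b)).
  pose proof (exp_pos a); pose proof (exp_pos b).
  unfold logistic in *; rewrite exp_plus in *; field; nra.
Qed.

Lemma logistic_sub_id a :
  logistic a u - u = u * (1 - u) * (exp a - 1) / (1 - u + u * exp a).
Proof. pose proof (logistic_denom_pos a); unfold logistic; field; lra. Qed.

Lemma logistic_eq_time a b : logistic a u = logistic b u -> u = 0 \/ u = 1 \/ a = b.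
Proof.
  pose proof (logistic_denom_pos a); pose proof (logistic_denom_pos b).
  intros Hab.
  assert (Hprod : u * (1 - u) * (exp a - exp b) = 0).
  { unfold logistic in Hab.
    apply (f_equal (fun z => z * (1 - u + u * exp a) * (1 - u + u * exp b))) in Hab.
    field_simplify in Hab; lra. }
  destruct (Rmult_integral _ _ Hprod) as [Hu|He].
  - destruct (Rmult_integral _ _ Hu); lra.
  - right; right; apply exp_inv; lra.
Qed.

Lemma logistic_shift_le b :
  0 <= b -> Rabs (logistic b u - u) <= (exp b - 1) * Rmin u (1 - u).
Proof.
  intros Hb; pose proof (exp_ge_1_plus b); pose proof (logistic_denom_pos b).
  assert (0 <= u * (1 - u)) by nra.
  rewrite logistic_sub_id, Rabs_pos_eq
    by (apply Rle_mult_inv_pos; [apply Rmult_le_pos|]; lra).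
  apply Rmult_le_reg_r with (1 - u + u * exp b); [lra|].
  unfold Rdiv; rewrite Rmult_assoc, Rinv_l, Rmult_1_r by lra.
  assert (Hmin : u * (1 - u) <= Rmin u (1 - u)) by (apply Rmin_case; nra).
  assert (0 <= Rmin u (1 - u)) by (apply Rmin_glb; lra).
  assert (1 <= 1 - u + u * exp b) by nra.
  apply Rle_trans with ((exp b - 1) * Rmin u (1 - u)).
  - rewrite Rmult_comm; apply Rmult_le_compat_l; lra.
  - rewrite <- (Rmult_1_r ((exp b - 1) * _)) at 1.
    apply Rmult_le_compat_l; [apply Rmult_le_pos|]; lra.
Qed.

Lemma logistic_le_exp a : u < 1 -> logistic a u <= exp a / (1 - u).
Proof.
  intros Hu; pose proof (logistic_denom_pos a); pose proof (exp_pos a); unfold logistic, Rdiv.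
  apply Rle_trans with (exp a * / (1 - u + u * exp a)).
  - apply Rmult_le_compat_r; [left; apply Rinv_0_lt_compat|]; nra.
  - apply Rmult_le_compat_l; [lra|]; apply Rinv_le_contravar; nra.
Qed.

End Logistic.

Lemma logistic_near_id a u :
  0 <= u <= 1 -> Rabs a <= 1/2 -> Rabs (logistic a u - u) <= 2 * Rabs a.
Proof.
  intros Hu Ha.
  assert (Hbound : forall b w, 0 <= w <= 1 -> 0 <= b <= 1/2 -> Rabs (logistic b w - w) <= 2 * b).
  { intros b w Hw Hb.
    eapply Rle_trans; [apply logistic_shift_le; lra|].
    pose proof (exp_sub1_le b Hb); pose proof (exp_ge_1_plus b).
    assert (Rmin w (1 - w) <= 1) by (apply Rmin_case; lra).
    assert (0 <= Rmin w (1 - w)) by (apply Rmin_glb; lra).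
    nra. }
  destruct (Rle_dec 0 a) as [Hpos|Hneg].
  - rewrite (Rabs_pos_eq a) in * by lra; apply Hbound; lra.
  - rewrite (Rabs_left a) in * by lra.
    (* [u] is the time-[-a] image of [logistic a u], and [-a > 0]. *)
    rewrite <- (logistic_0 u) at 2; replace 0 with (- a + a) by ring.
    rewrite (logistic_add u Hu), Rabs_minus_sym.
    apply Hbound; [apply logistic_range|]; lra.
Qed.

Lemma logistic_lipschitz a u v : 0 <= u <= 1 -> 0 <= v <= 1 ->
  Rabs (logistic a u - logistic a v) <= exp (Rabs a) * Rabs (u - v).
Proof.
  intros Hu Hv.
  pose proof (logistic_denom_pos u Hu a) as Du; pose proof (logistic_denom_pos v Hv a) as Dv.
  pose proof (exp_pos a) as Ea.
  assert (Hdiff : logistic a u - logistic a v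
                  = exp a / ((1 - u + u * exp a) * (1 - v + v * exp a)) * (u - v))
    by (unfold logistic; field; lra).
  set (Du' := 1 - u + u * exp a) in *; set (Dv' := 1 - v + v * exp a) in *.
  rewrite Hdiff, Rabs_mult, (Rabs_pos_eq (exp a / _)) by (apply Rle_mult_inv_pos; nra).
  apply Rmult_le_compat_r; [apply Rabs_pos|].
  apply Rmult_le_reg_r with (Du' * Dv'); [nra|].
  unfold Rdiv; rewrite Rmult_assoc, Rinv_l, Rmult_1_r by nra.
  destruct (Rle_dec 0 a) as [Hpos|Hneg].
  - rewrite Rabs_pos_eq by lra.
    assert (1 <= exp a) by (pose proof (exp_ge_1_plus a); lra).
    assert (1 <= Du') by (unfold Du'; nra); assert (1 <= Dv') by (unfold Dv'; nra).
    assert (1 <= Du' * Dv') by nra.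
    nra.
  - rewrite Rabs_left by lra.
    assert (Hinv : exp a * exp (- a) = 1) by (rewrite <- exp_plus, Rplus_opp_r, exp_0; lra).
    assert (exp a < 1) by (rewrite <- exp_0; apply exp_increasing; lra).
    assert (exp a <= Du') by (unfold Du'; nra); assert (exp a <= Dv') by (unfold Dv'; nra).
    assert (exp a * exp a <= Du' * Dv') by nra.
    pose proof (exp_pos (- a)).
    apply Rle_trans with (exp (- a) * (exp a * exp a)); [nra|].
    apply Rmult_le_compat_l; lra.
Qed.

(** * The space *)

Section PullbackMetric.
Context {T : Type} (f : T -> R).
Hypothesis f_inj : forall p q, f p = f q -> p = q.

Definition pullback_dist (p q : T) : R := Rabs (f p - f q).

Lemma pullback_dist_ge0 p q : 0 <= pullback_dist p q.
Proof. apply Rabs_pos. Qed.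

Lemma pullback_dist_eq0 p q : pullback_dist p q = 0 <-> p = q.
Proof.
  unfold pullback_dist; split.
  - intros H; apply f_inj; destruct (Req_dec (f p) (f q)) as [|Hne]; [assumption|].
    pose proof (Rabs_pos_lt (f p - f q) ltac:(lra)); lra.
  - intros ->; rewrite Rminus_diag, Rabs_R0; reflexivity.
Qed.

Lemma pullback_dist_sym p q : pullback_dist p q = pullback_dist q p.
Proof. apply Rabs_minus_sym. Qed.

Lemma pullback_dist_tri p q r : pullback_dist p r <= pullback_dist p q + pullback_dist q r.
Proof.
  unfold pullback_dist; replace (f p - f r) with ((f p - f q) + (f q - f r)) by ring.
  apply Rabs_triang.
Qed.

Definition pullback_metric : MetricSpace :=
  {| carrier := T; mdist := pullback_dist; mdist_ge0 := pullback_dist_ge0;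
     mdist_eq0 := pullback_dist_eq0; mdist_sym := pullback_dist_sym;
     mdist_tri := pullback_dist_tri |}.

End PullbackMetric.

Record cell := Cell { level : nat; coord : R; coord_range : 0 <= coord <= 1 }.

Lemma cell_ext c c' : level c = level c' -> coord c = coord c' -> c = c'.
Proof.
  destruct c as [n u Hu], c' as [n' u' Hu']; simpl; intros <- <-.
  f_equal; apply proof_irrelevance.
Qed.

Definition point := option cell.

(** [Some c] is the point of [I_(level c)] with affine coordinate [coord c]; [None] is [0]. *)
Definition embed (p : point) : R :=
  match p with None => 0 | Some c => (2 + coord c) * scale (level c) end.

Lemma embed_cell_bounds c : 2 * scale (level c) <= embed (Some c) <= 3 * scale (level c).
Proof. destruct c as [n u Hu]; simpl; pose proof (scale_pos n); nra. Qed.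

Lemma embed_level_gap c c' : (level c < level c')%nat ->
  5/4 * scale (level c) <= embed (Some c) - embed (Some c') <= 3 * scale (level c).
Proof.
  intros Hlt; pose proof (scale_gap _ _ Hlt); pose proof (scale_pos (level c')).
  pose proof (embed_cell_bounds c); pose proof (embed_cell_bounds c'); lra.
Qed.

Lemma embed_same_level c c' : level c = level c' ->
  embed (Some c) - embed (Some c') = scale (level c) * (coord c - coord c').
Proof. simpl; intros ->; ring. Qed.

Lemma embed_inj p q : embed p = embed q -> p = q.
Proof.
  assert (Hlevel : forall c c', (level c < level c')%nat -> embed (Some c) <> embed (Some c')).
  { intros c c' Hlt; pose proof (embed_level_gap _ _ Hlt); pose proof (scale_pos (level c)); lra. }
  destruct p as [c|], q as [c'|]; intros Heq; try reflexivity.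
  - f_equal; destruct (lt_eq_lt_dec (level c) (level c')) as [[Hlt|Hl]|Hlt].
    + now destruct (Hlevel _ _ Hlt).
    + apply cell_ext; [assumption|].
      pose proof (embed_same_level _ _ Hl); pose proof (scale_pos (level c)).
      apply Rmult_eq_reg_l with (scale (level c)); lra.
    + now destruct (Hlevel _ _ Hlt).
  - pose proof (embed_cell_bounds c); pose proof (scale_pos (level c)).
    change (embed None) with 0 in Heq; lra.
  - pose proof (embed_cell_bounds c'); pose proof (scale_pos (level c')).
    change (embed None) with 0 in Heq; lra.
Qed.

Definition space : MetricSpace := pullback_metric embed embed_inj.

Notation dX := (pullback_dist embed).

(** * The flow *)

Definition cell_flow (t : R) (c : cell) : cell :=
  Cell (level c) (logistic (t * scale (level c)) (coord c))
       (logistic_range _ (coord_range c) _).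

Definition flow (t : R) (p : point) : point := option_map (cell_flow t) p.

Lemma flow_None t : flow t None = None.
Proof. reflexivity. Qed.

Lemma flow_0 p : flow 0 p = p.
Proof.
  destruct p as [c|]; [|reflexivity]; simpl; f_equal.
  apply cell_ext; [reflexivity|]; simpl; rewrite Rmult_0_l; apply logistic_0.
Qed.

Lemma flow_add t s p : flow (t + s) p = flow t (flow s p).
Proof.
  destruct p as [c|]; [|reflexivity]; simpl; f_equal.
  apply cell_ext; [reflexivity|]; simpl.
  rewrite Rmult_plus_distr_r; apply logistic_add, coord_range.
Qed.

Lemma exp_abs_ge1 t : 1 <= exp (Rabs t).
Proof. pose proof (exp_ge_1_plus (Rabs t)); pose proof (Rabs_pos t); lra. Qed.

Lemma dX_flow_same_level t c c' : level c = level c' ->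
  dX (flow t (Some c)) (flow t (Some c')) <= exp (Rabs t) * dX (Some c) (Some c').
Proof.
  intros Hl; unfold pullback_dist; cbn [flow option_map].
  rewrite (embed_same_level (cell_flow t c) (cell_flow t c')), embed_same_level by exact Hl.
  simpl; rewrite <- Hl, !Rabs_mult, (Rabs_pos_eq (scale _)) by (left; apply scale_pos).
  pose proof (scale_pos (level c)); pose proof (scale_le (level c)).
  assert (Hslow : exp (Rabs (t * scale (level c))) <= exp (Rabs t)).
  { apply exp_le_exp; rewrite Rabs_mult, (Rabs_pos_eq (scale _)) by lra.
    pose proof (Rabs_pos t); nra. }
  pose proof (logistic_lipschitz (t * scale (level c)) _ _ (coord_range c) (coord_range c')).
  pose proof (Rabs_pos (coord c - coord c')).
  apply Rle_trans
    with (scale (level c) * (exp (Rabs (t * scale (level c))) * Rabs (coord c - coord c'))).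
  - apply Rmult_le_compat_l; lra.
  - assert (exp (Rabs (t * scale (level c))) * Rabs (coord c - coord c')
            <= exp (Rabs t) * Rabs (coord c - coord c')) by (apply Rmult_le_compat_r; lra).
    nra.
Qed.

Lemma dX_flow_level_lt t c c' : (level c < level c')%nat ->
  dX (flow t (Some c)) (flow t (Some c')) <= 3 * dX (Some c) (Some c').
Proof.
  intros Hlt; unfold pullback_dist; cbn [flow option_map].
  pose proof (embed_level_gap _ _ Hlt) as Hgap.
  pose proof (embed_level_gap (cell_flow t c) (cell_flow t c') Hlt) as Hgap_t.
  change (level (cell_flow t c)) with (level c) in Hgap_t.
  rewrite !Rabs_pos_eq by lra; lra.
Qed.

Lemma dX_flow_None t c : dX (flow t (Some c)) None <= 2 * dX (Some c) None.
Proof.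
  unfold pullback_dist; cbn [flow option_map].
  pose proof (embed_cell_bounds c); pose proof (embed_cell_bounds (cell_flow t c)) as Hb.
  change (level (cell_flow t c)) with (level c) in Hb.
  pose proof (scale_pos (level c)); change (embed None) with 0.
  rewrite !Rminus_0_r, !Rabs_pos_eq by lra; lra.
Qed.

Lemma flow_lipschitz t p q : dX (flow t p) (flow t q) <= 3 * exp (Rabs t) * dX p q.
Proof.
  pose proof (exp_abs_ge1 t); pose proof (pullback_dist_ge0 embed p q).
  destruct p as [c|], q as [c'|].
  - destruct (lt_eq_lt_dec (level c) (level c')) as [[Hlt|Hl]|Hlt].
    + pose proof (dX_flow_level_lt t _ _ Hlt); nra.
    + pose proof (dX_flow_same_level t _ _ Hl); nra.
    + pose proof (dX_flow_level_lt t _ _ Hlt).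
      rewrite !(pullback_dist_sym embed (flow t (Some c))),
        !(pullback_dist_sym embed (Some c)) in *.
      nra.
  - rewrite flow_None; pose proof (dX_flow_None t c); nra.
  - rewrite flow_None, !(pullback_dist_sym embed None).
    pose proof (dX_flow_None t c'); pose proof (pullback_dist_ge0 embed (Some c') None); nra.
  - rewrite flow_None; unfold pullback_dist; rewrite Rminus_diag, Rabs_R0; lra.
Qed.

Lemma flow_near_id h p : Rabs h <= 1/2 -> dX (flow h p) p <= 2 * Rabs h.
Proof.
  intros Hh; unfold pullback_dist; destruct p as [c|]; cbn [flow option_map].
  - rewrite embed_same_level by reflexivity; simpl.
    pose proof (scale_pos (level c)); pose proof (scale_le (level c)).
    assert (Hslow : Rabs (h * scale (level c)) <= Rabs h).
    { rewrite Rabs_mult, (Rabs_pos_eq (scale _)) by lra; pose proof (Rabs_pos h); nra. }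
    pose proof (logistic_near_id (h * scale (level c)) (coord c) (coord_range c) ltac:(lra)).
    rewrite Rabs_mult, Rabs_pos_eq by lra.
    pose proof (Rabs_pos (logistic (h * scale (level c)) (coord c) - coord c)); nra.
  - rewrite Rminus_diag, Rabs_R0; pose proof (Rabs_pos h); lra.
Qed.

Lemma flow_is_flow : @is_flow space flow.
Proof.
  split; [|split; [exact flow_0|exact flow_add]].
  intros t x eps Heps; set (M := 3 * exp (Rabs t)).
  assert (HM : 3 <= M) by (unfold M; pose proof (exp_abs_ge1 t); lra).
  set (delta := Rmin (1/2) (eps / (2 * (M + 2)))).
  assert (Hd1 : delta <= 1/2) by apply Rmin_l.
  assert (Hd2 : delta <= eps / (2 * (M + 2))) by apply Rmin_r.
  assert (Hd_pos : 0 < delta) by (apply Rmin_pos; [lra|apply Rdiv_lt_0_compat; lra]).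
  exists delta; split; [exact Hd_pos|]; intros s y Hs Hxy.
  change (dX (flow t x) (flow s y) < eps); change (dX x y < delta) in Hxy.
  replace (flow s y) with (flow (s - t) (flow t y)) by (rewrite <- flow_add; f_equal; ring).
  (* Split the error into the spatial estimate at time [t] and the time shift [s - t]. *)
  pose proof (flow_lipschitz t x y) as Hspace; fold M in Hspace.
  pose proof (flow_near_id (s - t) (flow t y) ltac:(lra)) as Htime.
  pose proof (pullback_dist_tri embed (flow t x) (flow t y) (flow (s - t) (flow t y))).
  rewrite pullback_dist_sym in Htime.
  assert (Hk : eps / (2 * (M + 2)) * (M + 2) = eps / 2) by (field; lra).
  pose proof (pullback_dist_ge0 embed x y).
  assert (M * dX x y <= M * delta) by (apply Rmult_le_compat_l; lra).
  nra.
Qed.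

(** * Compactness *)

Section Compactness.
Context {X : MetricSpace}.

Lemma compact_finite_union (A : nat -> X -> Prop) N :
  (forall n, compact_set (A n)) -> compact_set (fun x => exists n, (n < N)%nat /\ A n x).
Proof.
  intros HA I U HU; induction N as [|N IH]; intros Hcov.
  - exists nil; intros x [n [Hn _]]; lia.
  - destruct IH as [l Hl].
    { intros x [n [Hn Hx]]; apply Hcov; exists n; split; [lia|exact Hx]. }
    destruct (HA N I U HU) as [l' Hl'].
    { intros x Hx; apply Hcov; exists N; split; [lia|exact Hx]. }
    exists (l ++ l'); intros x [n [Hn Hx]].
    destruct (Nat.eq_dec n N) as [->|Hne].
    + destruct (Hl' x Hx) as [i [Hi HUi]]; exists i; split; [apply in_or_app|]; auto.
    + assert (Hn' : (n < N)%nat) by lia.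
      destruct (Hl x (ex_intro _ n (conj Hn' Hx))) as [i [Hi HUi]].
      exists i; split; [apply in_or_app|]; auto.
Qed.

Lemma compact_image_interval (g : R -> X) a b :
  (forall y eps, 0 < eps ->
     exists r, 0 < r /\ forall z, Rabs (z - y) < r -> mdist X (g y) (g z) < eps) ->
  compact_set (fun x => exists y, a <= y <= b /\ x = g y).
Proof.
  intros Hg I U HU Hcov.
  destruct (Rle_lt_dec a b) as [Hab|Hba]; [|exists nil; intros x [y [Hy _]]; lra].
  destruct (Hcov (g a) (ex_intro _ a (conj (conj (Rle_refl a) Hab) eq_refl))) as [i0 _].
  set (idx := fun y => epsilon (inhabits i0) (fun i => U i (g y))).
  assert (Hidx : forall y, a <= y <= b -> U (idx y) (g y))
    by (intros y Hy; apply epsilon_spec, Hcov; exists y; auto).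
  (* [V y] is the open set of parameters [z] near which [g] maps into the set chosen for [g y]. *)
  set (V := fun y z => a <= y <= b /\
              exists r, 0 < r /\ forall w, Rabs (w - z) < r -> U (idx y) (g w)).
  set (fam := Rtopology.mkfamily (fun y => a <= y <= b) V
                (fun y Hy => match Hy with ex_intro _ (conj H _) => H end)).
  destruct (Rtopology.compact_P3 a b fam) as [D [Hcover [l Hl]]].
  - split.
    + intros z Hz; exists z; split; [exact Hz|].
      destruct (HU _ _ (Hidx z Hz)) as [r [Hr Hball]].
      destruct (Hg z r Hr) as [r' [Hr' Hclose]].
      exists r'; split; [exact Hr'|]; intros w Hw; apply Hball, Hclose, Hw.
    + intros y z [Hy [r [Hr Hball]]].
      exists (mkposreal (r / 2) ltac:(lra)); intros z' Hz'.
      unfold Rtopology.disc in Hz'; simpl in Hz'.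
      split; [exact Hy|]; exists (r / 2); split; [lra|]; intros w Hw; apply Hball.
      replace (w - z) with ((w - z') + (z' - z)) by ring.
      pose proof (Rabs_triang (w - z') (z' - z)); lra.
  - exists (map idx l); intros x [y [Hy ->]].
    destruct (Hcover y Hy) as [y' [[Hy' [r [Hr Hball]]] HD]].
    exists (idx y'); split.
    + apply in_map, Hl; split; assumption.
    + apply Hball; rewrite Rminus_diag, Rabs_R0; exact Hr.
Qed.

End Compactness.

Definition clamp01 (y : R) : R := Rmax 0 (Rmin 1 y).

Lemma clamp01_range y : 0 <= clamp01 y <= 1.
Proof. unfold clamp01, Rmax, Rmin; repeat destruct Rle_dec; lra. Qed.

Lemma clamp01_id y : 0 <= y <= 1 -> clamp01 y = y.
Proof. unfold clamp01, Rmax, Rmin; repeat destruct Rle_dec; lra. Qed.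

Lemma clamp01_lipschitz y z : Rabs (clamp01 y - clamp01 z) <= Rabs (y - z).
Proof.
  unfold clamp01, Rmax, Rmin, Rabs; repeat destruct Rle_dec; repeat destruct Rcase_abs; lra.
Qed.

Definition cell_at (n : nat) (y : R) : cell := Cell n (clamp01 y) (clamp01_range y).

Lemma cell_at_coord c : cell_at (level c) (coord c) = c.
Proof. apply cell_ext; [reflexivity|]; apply clamp01_id, coord_range. Qed.

Lemma level_compact n :
  @compact_set space (fun x => exists y, 0 <= y <= 1 /\ x = Some (cell_at n y)).
Proof.
  apply (compact_image_interval (fun y => Some (cell_at n y) : space)).
  intros y eps Heps; exists eps; split; [exact Heps|]; intros z Hz.
  change (dX (Some (cell_at n y)) (Some (cell_at n z)) < eps); unfold pullback_dist.
  rewrite embed_same_level by reflexivity; simpl.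
  pose proof (scale_pos n); pose proof (scale_le n); pose proof (clamp01_lipschitz y z).
  rewrite Rabs_mult, Rabs_pos_eq, Rabs_minus_sym in * by lra.
  pose proof (Rabs_pos (clamp01 z - clamp01 y)); nra.
Qed.

Lemma space_compact : @compact_space space.
Proof.
  intros I U HU Hcov.
  destruct (Hcov None Logic.I) as [i0 Hi0].
  destruct (HU i0 None Hi0) as [r [Hr Hball]].
  destruct (scale_small (r / 4) ltac:(lra)) as [N HN].
  (* Every cell of level at least [N] lies in the ball around [None]. *)
  destruct (compact_finite_union _ N level_compact I U HU) as [l Hl].
  { intros x _; apply Hcov; exact Logic.I. }
  exists (i0 :: l); intros [c|] _.
  - destruct (lt_dec (level c) N) as [Hlt|Hge].
    + destruct (Hl (Some c)) as [i [Hi HUi]].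
      { exists (level c); split; [exact Hlt|]; exists (coord c).
        rewrite cell_at_coord; split; [apply coord_range|reflexivity]. }
      exists i; split; [right|]; assumption.
    + exists i0; split; [left; reflexivity|]; apply Hball.
      change (dX None (Some c) < r); unfold pullback_dist; change (embed None) with 0.
      pose proof (embed_cell_bounds c); pose proof (scale_antitone N (level c) ltac:(lia)).
      pose proof (scale_pos (level c)).
      rewrite Rminus_0_l, Rabs_Ropp, Rabs_pos_eq by lra; lra.
  - exists i0; split; [left|]; auto.
Qed.

(** * Singular points *)

Lemma dist_set_ge (X : MetricSpace) (z : X) (A : X -> Prop) m a0 :
  A a0 -> (forall a, A a -> m <= mdist X z a) -> m <= dist_set z A.
Proof.
  intros Ha0 Hm; unfold dist_set.
  set (E := fun r => (exists a, A a /\ r = mdist X z a) \/ ((forall a, ~ A a) /\ r = @diam X)).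
  destruct (Glb_Rbar_correct E) as [Hlb Hglb].
  assert (Hup : Rbar_le (Glb_Rbar E) (mdist X z a0)) by (apply Hlb; left; exists a0; auto).
  assert (Hlow : Rbar_le m (Glb_Rbar E)).
  { apply Hglb; intros r [[a [Ha ->]]|[Hnone _]]; [apply Hm, Ha|destruct (Hnone a0 Ha0)]. }
  destruct (Glb_Rbar E); simpl in *; tauto.
Qed.

Lemma Sing_None : Sing (X := space) flow None.
Proof. intros t; reflexivity. Qed.

Lemma Sing_Some c : Sing (X := space) flow (Some c) <-> coord c = 0 \/ coord c = 1.
Proof.
  split.
  - intros Hs; specialize (Hs 1); injection Hs as Hs.
    apply (f_equal coord) in Hs; simpl in Hs; rewrite <- (logistic_0 (coord c)) in Hs at 2.
    pose proof (scale_pos (level c)).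
    destruct (logistic_eq_time _ (coord_range c) _ _ Hs) as [|[|]]; auto; lra.
  - intros Hend t; cbn [flow option_map]; f_equal; apply cell_ext; [reflexivity|]; simpl.
    destruct Hend as [-> | ->]; [apply logistic_at_0|apply logistic_at_1].
Qed.

Lemma dist_to_singular c a : Sing (X := space) flow a ->
  scale (level c) * Rmin (coord c) (1 - coord c) <= dX (Some c) a.
Proof.
  intros Hs; unfold pullback_dist.
  pose proof (coord_range c); pose proof (scale_pos (level c)).
  assert (Hmin : 0 <= Rmin (coord c) (1 - coord c) <= 1) by (apply Rmin_case; lra).
  assert (scale (level c) * Rmin (coord c) (1 - coord c) <= scale (level c)) by nra.
  destruct a as [c'|].
  - pose proof (coord_range c'); pose proof (scale_pos (level c')).
    destruct (lt_eq_lt_dec (level c) (level c')) as [[Hlt|Hl]|Hlt].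
    + pose proof (embed_level_gap _ _ Hlt); rewrite Rabs_pos_eq; lra.
    + rewrite embed_same_level, Rabs_mult, Rabs_pos_eq by (assumption || lra).
      apply Rmult_le_compat_l; [lra|].
      destruct (proj1 (Sing_Some c') Hs) as [-> | ->];
        [rewrite Rminus_0_r, Rabs_pos_eq by lra; apply Rmin_l|].
      rewrite Rabs_minus_sym, Rabs_pos_eq by lra; apply Rmin_r.
    + pose proof (embed_level_gap _ _ Hlt).
      pose proof (scale_antitone _ _ (Nat.lt_le_incl _ _ Hlt)).
      rewrite Rabs_minus_sym, Rabs_pos_eq; lra.
  - change (embed None) with 0; pose proof (embed_cell_bounds c).
    rewrite Rminus_0_r, Rabs_pos_eq; lra.
Qed.

Lemma dX_flow_shift c b : 0 <= b ->
  dX (Some c) (flow b (Some c))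
  <= (exp (b * scale (level c)) - 1) * (scale (level c) * Rmin (coord c) (1 - coord c)).
Proof.
  intros Hb; unfold pullback_dist; cbn [flow option_map].
  rewrite Rabs_minus_sym, embed_same_level by reflexivity; simpl.
  pose proof (scale_pos (level c)).
  rewrite Rabs_mult, (Rabs_pos_eq (scale _)) by lra.
  pose proof (logistic_shift_le _ (coord_range c) (b * scale (level c)) ltac:(nra)).
  nra.
Qed.

Lemma dX_flow_shift_dist_Sing c b : 0 <= b ->
  dX (Some c) (flow b (Some c))
  <= (exp (b * scale (level c)) - 1) * dist_set (X := space) (Some c) (Sing (X := space) flow).
Proof.
  intros Hb; eapply Rle_trans; [apply dX_flow_shift, Hb|].
  apply Rmult_le_compat_l.
  - pose proof (exp_ge_1_plus (b * scale (level c))); pose proof (scale_pos (level c)); nra.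
  - apply (dist_set_ge space _ _ _ None Sing_None), dist_to_singular.
Qed.

Lemma regular_not_periodic c t t' : 0 < coord c < 1 ->
  flow t (Some c) = flow t' (Some c) -> t = t'.
Proof.
  intros Hc Heq; injection Heq as Heq.
  pose proof (scale_pos (level c)).
  destruct (logistic_eq_time _ (coord_range c) _ _ Heq) as [|[|Hts]]; [lra|lra|].
  apply Rmult_eq_reg_r in Hts; lra.
Qed.

Lemma flow_not_singular_expansive : ~ singular_expansive (X := space) flow.
Proof.
  intros Hse; destruct (Hse 1 ltac:(lra)) as [delta [Hdelta Hshadow]].
  destruct (scale_small (delta / 4) ltac:(lra)) as [n Hn].
  pose proof (scale_pos n); pose proof (scale_le n).
  set (c := Cell n (1/2) ltac:(lra)).
  destruct (Hshadow (Some c) (flow 2 (Some c)) (fun t => t)) as [t0 [u [Hu Heq]]].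
  - split; [exact (derivable_continuous id derivable_id)|split; [auto|]].
    intros y; exists y; reflexivity.
  - intros t; rewrite <- flow_add, Rplus_comm, flow_add.
    change (flow t (Some c)) with (Some (cell_flow t c)).
    eapply Rle_trans; [apply dX_flow_shift_dist_Sing; lra|].
    apply Rmult_le_compat_r.
    + apply (dist_set_ge space _ _ _ None Sing_None); intros; apply pullback_dist_ge0.
    + pose proof (exp_sub1_le (2 * scale n) ltac:(lra)); simpl; lra.
  - rewrite <- flow_add in Heq; apply regular_not_periodic in Heq; simpl; lra.
Qed.

(** * Compact invariant sets *)

Lemma compact_dist_pos (X : MetricSpace) (K : X -> Prop) a :
  compact_set K -> ~ K a -> exists eta, 0 < eta /\ forall x, K x -> eta <= mdist X x a.
Proof.
  intros HK Ha.
  destruct (HK posreal (fun r x => r < mdist X x a)) as [l Hl].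
  - intros r x Hx; exists (mdist X x a - r); split; [lra|]; intros y Hy.
    pose proof (mdist_tri X x y a); lra.
  - intros x Hx.
    assert (Hxa : 0 < mdist X x a).
    { destruct (mdist_ge0 X x a) as [|Heq]; [assumption|].
      symmetry in Heq; apply mdist_eq0 in Heq; subst; contradiction. }
    exists (mkposreal (mdist X x a / 2) ltac:(lra)); simpl; lra.
  - exists (fold_right Rmin 1 (map pos l)); split.
    + clear Hl; induction l as [|r l IH]; simpl; [lra|apply Rmin_pos; [apply cond_pos|exact IH]].
    + intros x Hx; destruct (Hl x Hx) as [r [Hr Hrx]]; left; eapply Rle_lt_trans; [|exact Hrx].
      clear Hl; induction l as [|r' l IH]; simpl in *; [contradiction|].
      destruct Hr as [<-|Hr]; [apply Rmin_l|eapply Rle_trans; [apply Rmin_r|auto]].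
Qed.

Lemma expansive_on_empty (X : MetricSpace) (phi : R -> X -> X) (L : X -> Prop) :
  (forall x, ~ L x) -> expansive_on phi L.
Proof. intros Hempty eps _; exists 1; split; [lra|]; intros x y s Hx; destruct (Hempty x Hx). Qed.

Definition cell_bottom (n : nat) : cell := Cell n 0 (conj (Rle_refl 0) Rle_0_1).

Lemma flow_approaches_bottom c eta : 0 < eta -> coord c < 1 ->
  exists t, dX (flow t (Some c)) (Some (cell_bottom (level c))) < eta.
Proof.
  intros Heta Hc; pose proof (coord_range c); pose proof (scale_pos (level c)).
  pose proof (scale_le (level c)).
  set (a := ln (eta * (1 - coord c) / 2)).
  assert (Hpos : 0 < eta * (1 - coord c) / 2) by (apply Rdiv_lt_0_compat; nra).
  exists (a / scale (level c)); unfold pullback_dist; cbn [flow option_map].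
  rewrite embed_same_level by reflexivity; simpl.
  replace (a / scale (level c) * scale (level c)) with a by (field; lra).
  pose proof (logistic_range _ (coord_range c) a).
  pose proof (logistic_le_exp _ (coord_range c) a Hc) as Hle.
  assert (Hexp : exp a = eta * (1 - coord c) / 2) by (apply exp_ln, Hpos).
  rewrite Hexp in Hle.
  replace (eta * (1 - coord c) / 2 / (1 - coord c)) with (eta / 2) in Hle by (field; lra).
  rewrite Rminus_0_r, Rabs_mult, !Rabs_pos_eq by lra; nra.
Qed.

Lemma compact_invariant_regular_empty (L : space -> Prop) :
  compact_set L -> invariant (X := space) flow L ->
  (forall x, L x -> ~ Sing (X := space) flow x) -> forall x, ~ L x.
Proof.
  intros Hc Hinv Hreg [c|] Hx; [|exact (Hreg _ Hx Sing_None)].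
  set (b := Some (cell_bottom (level c)) : space).
  assert (Hb : ~ L b) by (intros Hb; apply (Hreg _ Hb), Sing_Some; left; reflexivity).
  destruct (compact_dist_pos space L b Hc Hb) as [eta [Heta Hfar]].
  assert (Hc1 : coord c < 1).
  { destruct (coord_range c) as [_ [Hlt|Heq]]; [exact Hlt|].
    destruct (Hreg _ Hx); apply Sing_Some; right; exact Heq. }
  destruct (flow_approaches_bottom c eta Heta Hc1) as [t Ht].
  specialize (Hfar _ (Hinv t _ Hx)).
  change (eta <= dX (flow t (Some c)) (Some (cell_bottom (level c)))) in Hfar; lra.
Qed.

Theorem mainTheorem16 :
  exists (X : MetricSpace) (phi : R -> X -> X),
    @compact_space X /\ is_flow phi /\ ~ singular_expansive phi /\
    (forall L : X -> Prop, compact_set L -> invariant phi L ->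
       (forall x, L x -> ~ Sing phi x) -> expansive_on phi L).
Proof.
  exists space, flow; split; [exact space_compact|].
  split; [exact flow_is_flow|split; [exact flow_not_singular_expansive|]].
  intros L Hc Hinv Hreg; apply expansive_on_empty.
  exact (compact_invariant_regular_empty L Hc Hinv Hreg).
Qed.
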